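(* Let $G$ be a finite simple graph and $c_0:V(G)\to\mathbb{Z}$ an initial configuration, with $(c_t)_{t\ge0}$ the configurations of the diffusion process. Then $G$ with $c_0$ is tight if and only if there exists $t\geq 0$ such that $c_t$ has property plus.
   Context: Diffusion process: for a configuration $c_t:V(G)\to\mathbb{Z}$ and a vertex $u$, let $\Delta_t^-(u)=|\{w\in N(u): c_t(u)>c_t(w)\}|$, $\Delta_t^+(u)=|\{w\in N(u): c_t(u)<c_t(w)\}|$ and $\Delta_t(u)=\Delta_t^+(u)-\Delta_t^-(u)$. Then $c_{t+1}(u)=c_t(u)+\Delta_t(u)$ for all $u$ simultaneously. The pair $(G,c_0)$ is called tight if the process is eventually fixed or eventually periodic with period length $2$, i.e. there exists $t\geq0$ with $c_{t+2}=c_t$. A configuration $c_i$ has property plus if (1) $c_i(u)+\Delta_i(u)>c_i(v)+\Delta_i(v)$ for every edge $uv$ with $c_i(u)<c_i(v)$, and (2) $c_i(u)+\Delta_i(u)=c_i(v)+\Delta_i(v)$ for every edge $uv$ with $c_i(u)=c_i(v)$. *)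

From mathcomp Require Import all_boot all_order all_algebra.
Set Implicit Arguments. Unset Strict Implicit. Unset Printing Implicit Defensive.
Import Order.TTheory GRing.Theory Num.Theory.
Local Open Scope ring_scope.

Definition simple_graph (T : finType) (e : rel T) : Prop :=
  symmetric e /\ irreflexive e.

Section Diffusion.
Variables (T : finType) (e : rel T).

Definition delta_minus (c : T -> int) (u : T) : int :=
  (#|[set w | e u w & c w < c u]|)%:Z.
Definition delta_plus (c : T -> int) (u : T) : int :=
  (#|[set w | e u w & c u < c w]|)%:Z.
Definition delta (c : T -> int) (u : T) : int :=
  delta_plus c u - delta_minus c u.

Definition step (c : T -> int) : T -> int := fun u => c u + delta c u.

Definition config (c0 : T -> int) (t : nat) : T -> int := iter t step c0.

Definition tight (c0 : T -> int) : Prop :=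
  exists t : nat, config c0 t.+2 = config c0 t.

Definition property_plus (c : T -> int) : Prop :=
  (forall u v, e u v -> c u < c v -> c u + delta c u > c v + delta c v) /\
  (forall u v, e u v -> c u = c v -> c u + delta c u = c v + delta c v).
End Diffusion.

From mathcomp Require Import all_boot all_order all_algebra.
From mathcomp Require Import zify.
From Stdlib Require Import FunctionalExtensionality.
Import Order.TTheory GRing.Theory Num.Theory.
Local Open Scope ring_scope.
Set Implicit Arguments. Unset Strict Implicit.

(* Let a = c_t and b = c_(t+1) with c_(t+2) = c_t, so that Delta_b = - Delta_a.
   Summation by parts over the edges gives
     sum_(u ~ w) sgz (c w - c u) (x w - x u) = - 2 sum_u x u Delta_c(u),
   hence for x = a and for x = b the edge sum of
   (sgz (a w - a u) + sgz (b w - b u)) (x w - x u) vanishes.  All its terms are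
   nonnegative, so they vanish too, which forces sgz (b w - b u) = - sgz (a w - a u)
   on every edge: one step reverses the order along every edge, and this is
   exactly property plus of a.  Conversely, such a reversal turns Delta_a into
   - Delta_a, so two steps return to a. *)

Lemma sgz_addr_mulr_ge0 (p q : int) : 0 <= (sgz p + sgz q) * q.
Proof. by case: (sgzP p); case: (sgzP q); lia. Qed.

Lemma sgz_opp_of_mulr_eq0 (p q : int) :
  (sgz p + sgz q) * p = 0 -> (sgz p + sgz q) * q = 0 -> sgz q = - sgz p.
Proof.
have [/eqP|s_neq0] := eqVneq (sgz p + sgz q) 0; first by rewrite addrC addr_eq0 => /eqP.
move=> /eqP; rewrite mulf_eq0 (negbTE s_neq0) => /eqP p0.
move=> /eqP; rewrite mulf_eq0 (negbTE s_neq0) => /eqP q0.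
by move: s_neq0; rewrite p0 q0 sgz0 addr0 eqxx.
Qed.

Section Diffusion.
Variables (T : finType) (e : rel T).
Hypothesis e_sym : symmetric e.

Lemma delta_sgz (c : T -> int) u : delta e c u = \sum_(w | e u w) sgz (c w - c u).
Proof.
rewrite /delta /delta_plus /delta_minus -!sum1dep_card -!natz !natr_sum.
rewrite !big_mkcondr -sumrB; apply: eq_bigr => w _.
case: ltgtP => [lt_uw|lt_wu|->].
- by rewrite gtr0_sgz ?subr_gt0 ?subr0.
- by rewrite ltr0_sgz ?subr_lt0 ?sub0r.
- by rewrite !subrr sgz0.
Qed.

Definition edge_pairing (c x : T -> int) : int :=
  \sum_u \sum_(w | e u w) sgz (c w - c u) * (x w - x u).

Lemma edge_pairingE (c x : T -> int) :
  edge_pairing c x = - (\sum_u x u * delta e c u) *+ 2.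
Proof.
have swap : \sum_u \sum_(w | e u w) sgz (c w - c u) * x w
            = - \sum_u x u * delta e c u.
  rewrite (exchange_big_dep xpredT) //= -sumrN; apply: eq_bigr => w _.
  rewrite delta_sgz mulr_sumr -sumrN.
  apply: eq_big => [u|u _]; first by rewrite e_sym.
  by rewrite -opprB sgzN mulNr mulrC.
transitivity (\sum_u \sum_(w | e u w) sgz (c w - c u) * x w
              - \sum_u x u * delta e c u).
  rewrite -sumrB; apply: eq_bigr => u _.
  rewrite delta_sgz mulr_sumr -sumrB.
  by apply: eq_bigr => w _; rewrite mulrBr [x u * _]mulrC.
by rewrite swap mulr2n.
Qed.

Section OppositeDelta.
Variables a b : T -> int.
Hypothesis delta_opp : forall u, delta e b u = - delta e a u.

Lemma edge_pairing_add_eq0 (x : T -> int) : edge_pairing a x + edge_pairing b x = 0.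
Proof.
rewrite !edge_pairingE -mulrnDl -opprD -big_split /= big1 ?oppr0 ?mul0rn // => u _.
by rewrite delta_opp mulrN subrr.
Qed.

Lemma edge_terms_eq0 (x : T -> int) :
  let F u w := (sgz (a w - a u) + sgz (b w - b u)) * (x w - x u) in
  (forall u w, e u w -> 0 <= F u w) -> forall u w, e u w -> F u w = 0.
Proof.
move=> F F_ge0 u w euw.
have sumF0 : \sum_u \sum_(w | e u w) F u w = 0.
  rewrite -[RHS](edge_pairing_add_eq0 x) /edge_pairing -big_split /=.
  apply: eq_bigr => v _.
  by rewrite -big_split /=; apply: eq_bigr => z _; rewrite /F mulrDl.
have sumF_ge0 v : 0 <= \sum_(w | e v w) F v w by apply: sumr_ge0 => z; apply: F_ge0.
exact: (psumr_eq0P (F_ge0 u) (psumr_eq0P (fun v _ => sumF_ge0 v) sumF0 isT)).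
Qed.

Lemma sgz_reversed_of_delta_opp u w :
  e u w -> sgz (b w - b u) = - sgz (a w - a u).
Proof.
move=> euw; apply: sgz_opp_of_mulr_eq0.
- apply: (edge_terms_eq0 (x := a)) euw => {}u {}w _.
  by rewrite addrC sgz_addr_mulr_ge0.
- by apply: (edge_terms_eq0 (x := b)) euw => {}u {}w _; rewrite sgz_addr_mulr_ge0.
Qed.

End OppositeDelta.

Lemma property_plusP (a : T -> int) :
  property_plus e a <->
  forall u v, e u v -> sgz (step e a v - step e a u) = - sgz (a v - a u).
Proof.
split=> [[lt_step eq_step] u v euv | rev].
  case: (ltgtP (a u) (a v)) => [lt_uv|lt_vu|eq_uv].
  - have := lt_step u v euv lt_uv.
    by rewrite -subr_lt0 => /ltr0_sgz->; rewrite gtr0_sgz ?subr_gt0.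
  - have := lt_step v u (etrans (e_sym v u) euv) lt_vu.
    by rewrite -subr_gt0 => /gtr0_sgz->; rewrite ltr0_sgz ?subr_lt0 ?opprK.
  - have step_eq : step e a u = step e a v := eq_step u v euv eq_uv.
    by rewrite step_eq eq_uv !subrr sgz0 oppr0.
split=> u v euv a_uv.
  have := rev u v euv; rewrite [sgz (a v - a u)]gtr0_sgz ?subr_gt0 // => sgz_step.
  by rewrite -subr_lt0 -sgz_lt0 [sgz _]sgz_step.
have : sgz (step e a v - step e a u) == 0 by rewrite rev // a_uv subrr sgz0 oppr0.
by rewrite sgz_eq0 subr_eq0 => /eqP/esym.
Qed.

Lemma step_stepK_of_property_plus (a : T -> int) :
  property_plus e a -> step e (step e a) =1 a.
Proof.
move=> /property_plusP rev u.
have delta_step : delta e (step e a) u = - delta e a u.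
  by rewrite !delta_sgz -sumrN; apply: eq_bigr => w; apply: rev.
by rewrite {1}/step delta_step /step addrK.
Qed.

Lemma property_plus_of_step_stepK (a : T -> int) :
  step e (step e a) =1 a -> property_plus e a.
Proof.
move=> stepK; apply/property_plusP => u v.
apply: (sgz_reversed_of_delta_opp (a := a)) => w.
apply: (addrI (step e a w)); rewrite [RHS]addrK; exact: stepK.
Qed.

End Diffusion.

Theorem theorem14 (T : finType) (e : rel T) (c0 : T -> int) :
  simple_graph e ->
  (tight e c0 <-> exists t : nat, property_plus e (config e c0 t)).
Proof.
move=> [e_sym _]; split=> [[t periodic] | [t plus_t]]; exists t.
  apply: (property_plus_of_step_stepK e_sym) => u.
  exact: (congr1 (@^~ u) periodic).
exact: functional_extensionality (step_stepK_of_property_plus e_sym plus_t).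
Qed.
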